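(* Let $n,d,a$ be positive integers. The triple $(n,d,a)$ is bad if and only if there exists a point $Q\in\mathcal{V}_d$ such that $\mathcal{P}_\lambda(Q)=0$ for every partition $\lambda$ of $a$.
   Context: $\mathcal{V}_d=\{(z_1,\dots,z_n)\in\mathbb{C}^n: z_i^d=1\ \forall i,\ z_n=1\}$. For a positive integer $m$, $\mathcal{P}_m=x_1^m+\dots+x_n^m$, and for a partition $\lambda=(\lambda_1,\dots,\lambda_r)$, $\mathcal{P}_\lambda=\prod_{t=1}^r\mathcal{P}_{\lambda_t}$. Let $R=\mathbb{C}[x_1,\dots,x_n]$ with $\mathfrak{S}_n$ permuting variables, and $R_a^{\mathfrak{S}_n}$ the symmetric polynomials homogeneous of degree $a$. The triple $(n,d,a)$ is good if there exists $f\in R_a^{\mathfrak{S}_n}$ such that $x_1^d-x_n^d,\dots,x_{n-1}^d-x_n^d,f$ is a regular sequence (equivalently, $f$ has no zero on $\mathcal{V}_d$); otherwise it is bad. *)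

From HB Require Import structures.
From mathcomp Require Import all_boot all_order all_algebra.
From mathcomp Require Import reals.
From mathcomp Require Import complex.
From mathcomp Require Import mpoly.
Set Implicit Arguments. Unset Strict Implicit. Unset Printing Implicit Defensive.
Import Order.TTheory GRing.Theory Num.Theory.
Local Open Scope ring_scope.

(* V_d = {z in C^n : z_i^d = 1 for all i, z_n = 1}; coordinates are indexed
   by 'I_n = {0,...,n-1}, so z_n is the coordinate of index n-1. *)
Definition in_Vd (C : nzRingType) (n d : nat) (z : 'I_n -> C) : Prop :=
  (forall i : 'I_n, z i ^+ d = 1) /\ (forall i : 'I_n, val i = n.-1 -> z i = 1).

Definition powsum (C : nzRingType) (n m : nat) : {mpoly C[n]} :=
  \sum_(i < n) 'X_i ^+ m.

Definition powsum_part (C : nzRingType) (n : nat) (la : seq nat) : {mpoly C[n]} :=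
  \prod_(m <- la) powsum C n m.

Definition is_partition (a : nat) (la : seq nat) : bool :=
  [&& sorted geq la, all (fun m => 0 < m)%N la & sumn la == a].

Definition good (R : realType) (n d k : nat) : Prop :=
  exists f : {mpoly R[i][n]},
    [/\ f \is symmetric, f \is k.-homog &
        forall z : 'I_n -> R[i], in_Vd d z -> f.@[z] != 0].

Definition bad (R : realType) (n d k : nat) : Prop := ~ good R n d k.

(* Over a field of characteristic 0, the fundamental theorem on symmetric
   polynomials and Newton's identities write every symmetric polynomial that is
   homogeneous of degree a as a linear combination of the P_lambda with lambda a
   partition of a, so it vanishes wherever all of these do.  Conversely, if each
   of the finitely many points Q of V_d has some P_(lambda_Q) (lambda_Q |- a)
   not vanishing at Q, then at every Q the combination sum_Q t^(i_Q) P_(lambda_Q)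
   is a nonzero polynomial in t; a t avoiding all of their roots gives a
   symmetric f of degree a without zeros on V_d. *)

From HB Require Import structures.
From mathcomp Require Import all_boot all_order all_algebra.
From mathcomp Require Import reals complex mpoly.
From mathcomp Require Import perm ring.
From Stdlib Require Import Classical.
Set Implicit Arguments. Unset Strict Implicit. Unset Printing Implicit Defensive.
Import Order.TTheory GRing.Theory Num.Theory.
Local Open Scope ring_scope.

Section NewtonIdentities.
Variable C : comNzRingType.

Definition newton_identities (e p : nat -> C) : Prop :=
  forall k, k.+1%:R * e k.+1 = \sum_(i < k.+1) (-1) ^+ i * e (k - i)%N * p i.+1.

Lemma eq_newton_identities (e1 e2 p1 p2 : nat -> C) :
  e1 =1 e2 -> p1 =1 p2 -> newton_identities e1 p1 -> newton_identities e2 p2.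
Proof.
move=> e12 p12 N1 k; rewrite -e12 N1; apply: eq_bigr => i _.
by rewrite e12 p12.
Qed.

(* Adjoining a coordinate x to the point multiplies the generating series of
   [e] by [1 + x t] and adds [x ^+ i] to the [i]-th power sum. *)
Lemma newton_identities_adjoin (e p : nat -> C) (x : C) :
  newton_identities e p ->
  newton_identities (fun k => e k + (if k is j.+1 then x * e j else 0))
                    (fun i => p i + x ^+ i).
Proof.
move=> Nep k /=.
pose A j := \sum_(i < j.+1) (-1) ^+ i * e (j - i)%N * x ^+ i.+1.
pose B := \sum_(i < k.+1) (-1) ^+ i *
  (if (k - i)%N is j.+1 then x * e j else 0) * (p i.+1 + x ^+ i.+1).
have expand : \sum_(i < k.+1) (-1) ^+ i *
      (e (k - i)%N + (if (k - i)%N is j.+1 then x * e j else 0)) *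
      (p i.+1 + x ^+ i.+1)
    = k.+1%:R * e k.+1 + A k + B.
  rewrite Nep /A /B -!big_split /=; apply: eq_bigr => i _.
  by case: (k - i)%N => [|j] /=; ring.
have shifted : B = if k is j.+1 then x * (j.+1%:R * e j.+1 + A j) else 0.
  rewrite /B; clear expand B.
  case: k => [|k]; first by rewrite big_ord1 mulr0 mul0r.
  rewrite big_ord_recr /= subnn mulr0 mul0r addr0 Nep /A mulrDr !mulr_sumr.
  rewrite -big_split; apply: eq_bigr => i _.
  rewrite subSn; last by rewrite -ltnS.
  by rewrite /=; ring.
have telescope j : A j.+1 = x * e j.+1 - x * A j.
  rewrite /A big_ord_recl subn0 mulr_sumr -sumrN; congr (_ + _).
    by rewrite expr0 mul1r mulrC.
  by apply: eq_bigr => i _; rewrite subSS lift0 !exprS; ring.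
rewrite -[LHS]/(_ * (e k.+1 + x * e k)) {}expand {}shifted.
clear B; case: k => [|k].
  by rewrite /A big_ord1 subnn expr0 expr1 mul1r; ring.
rewrite telescope -[k.+2%:R]natr1 -[k.+1%:R]natr1; ring.
Qed.

End NewtonIdentities.

Lemma meval_mwiden (C : comNzRingType) n (p : {mpoly C[n]}) (v : 'I_n.+1 -> C) :
  (mwiden p).@[v] = p.@[fun i => v (widen_ord (leqnSn n) i)].
Proof.
elim/mpolyind: p => [|c m p _ _ IH]; first by rewrite !raddf0.
rewrite !raddfD /= IH mwidenZ !mevalZ mwidenX !mevalX; congr (_ * _ + _).
rewrite big_ord_recr /= mnmwiden_ordmax expr0 mulr1.
by apply: eq_bigr => i _; rewrite mnmwiden_widen.
Qed.

Lemma newton_identities_mesym (C : comNzRingType) n (v : 'I_n -> C) :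
  newton_identities (fun k => (mesym n C k).@[v])
                    (fun i => \sum_(j < n) v j ^+ i).
Proof.
elim: n v => [|n IHn] v.
  move=> k; rewrite mesym_geqnE // meval0 mulr0 big1 // => i _.
  by rewrite big_ord0 mulr0.
pose v' i := v (widen_ord (leqnSn n) i).
apply: eq_newton_identities (newton_identities_adjoin (v ord_max) (IHn v')).
  case=> [|k] /=; first by rewrite !mesym0E !meval1 addr0.
  by rewrite mesymSS rmorphD rmorphM /= !meval_mwiden mevalXU mulrC.
by move=> i /=; rewrite big_ord_recr.
Qed.

Section WeightedSpan.
Variables (C : comNzRingType) (s : nat -> C).

Definition wspan (w : nat) (x : C) : Prop :=
  exists r : seq (C * seq nat),
    all (fun q => (sumn q.2 == w) && all (fun m => 0 < m)%N q.2) r /\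
    x = \sum_(q <- r) q.1 * \prod_(m <- q.2) s m.

Lemma wspan_gen m : (0 < m)%N -> wspan m (s m).
Proof.
move=> m_gt0; exists [:: (1, [:: m])].
by rewrite /= addn0 eqxx m_gt0 !big_seq1 mul1r.
Qed.

Lemma wspan1 : wspan 0 1.
Proof. by exists [:: (1, [::])]; rewrite !big_seq1 /= big_nil mul1r. Qed.

Lemma wspan0 w : wspan w 0.
Proof. by exists [::]; rewrite big_nil. Qed.

Lemma wspanD w x y : wspan w x -> wspan w y -> wspan w (x + y).
Proof.
move=> [rx [rx_w ->]] [ry [ry_w ->]]; exists (rx ++ ry).
by rewrite all_cat rx_w ry_w big_cat.
Qed.

Lemma wspanMl w c x : wspan w x -> wspan w (c * x).
Proof.
move=> [r [r_w ->]]; exists [seq (c * q.1, q.2) | q <- r]; rewrite all_map.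
split; first exact: sub_all r_w.
by rewrite big_map mulr_sumr; apply: eq_bigr => q _; rewrite mulrA.
Qed.

Lemma wspanM w1 w2 x y : wspan w1 x -> wspan w2 y -> wspan (w1 + w2) (x * y).
Proof.
move=> [rx [rx_w ->]] [ry [ry_w ->]].
exists [seq (qx.1 * qy.1, qx.2 ++ qy.2) | qx <- rx, qy <- ry]; split.
  apply/allP => _ /allpairsPdep [qx [qy [/(allP rx_w) + /(allP ry_w) + ->]]] /=.
  rewrite sumn_cat all_cat => /andP [/eqP -> ->] /andP [/eqP -> ->].
  by rewrite eqxx.
rewrite big_allpairs_dep mulr_suml; apply: eq_bigr => qx _.
by rewrite mulr_sumr; apply: eq_bigr => qy _; rewrite big_cat /=; ring.
Qed.

Lemma wspan_sum (I : Type) (r : seq I) (P : pred I) (F : I -> C) w :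
  (forall i, P i -> wspan w (F i)) -> wspan w (\sum_(i <- r | P i) F i).
Proof. by apply: (big_ind (wspan w)); [apply: wspan0 | apply: wspanD]. Qed.

Lemma wspan_prod (I : Type) (r : seq I) (P : pred I) (F : I -> C) (W : I -> nat) :
  (forall i, P i -> wspan (W i) (F i)) ->
  wspan (\sum_(i <- r | P i) W i)%N (\prod_(i <- r | P i) F i).
Proof.
apply: (big_ind2 (fun w x => wspan x w)); first exact: wspan1.
by move=> x1 x2 w1 w2; apply: wspanM.
Qed.

Lemma wspanX w x k : wspan w x -> wspan (w * k) (x ^+ k).
Proof.
move=> wx; elim: k => [|k IHk]; first by rewrite muln0 expr0; apply: wspan1.
by rewrite exprS mulnS; apply: wspanM.
Qed.

Lemma wspan_eq0 w x :
  (forall la, is_partition w la -> \prod_(m <- la) s m = 0) -> wspan w x -> x = 0.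
Proof.
move=> s_la0 [r [r_w ->]]; rewrite big_seq big1 // => q /(allP r_w).
case/andP => /eqP sum_q q_gt0.
have sort_q : perm_eq (sort geq q.2) q.2 by rewrite perm_sort.
rewrite -(perm_big _ sort_q) /= s_la0 ?mulr0 //.
rewrite /is_partition sort_sorted; last by move=> u v; apply: leq_total.
by rewrite all_sort q_gt0 (perm_sumn sort_q) sum_q eqxx.
Qed.

End WeightedSpan.

Lemma wspan_newton (C : fieldType) (s e : nat -> C) :
  [pchar C] =i pred0 -> newton_identities e s -> e 0%N = 1 ->
  forall k, wspan s k (e k).
Proof.
move=> charC0 Nes e0; elim/ltn_ind => -[_|k IHk].
  by rewrite e0; apply: wspan1.
have k1_neq0 : k.+1%:R != 0 :> C by rewrite (pcharf0P _).1.
rewrite -[e k.+1](mulKf k1_neq0) Nes; apply/wspanMl/wspan_sum => i _.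
have le_ik : (i <= k)%N by rewrite -ltnS.
have -> : wspan s k.+1 = wspan s (k - i + i.+1) by rewrite addnS subnK.
by apply: wspanM; [apply/wspanMl/IHk; rewrite ltnS leq_subr | apply: wspan_gen].
Qed.

Lemma meval_powsum (C : comNzRingType) n m (v : 'I_n -> C) :
  (powsum C n m).@[v] = \sum_(j < n) v j ^+ m.
Proof.
by rewrite /powsum rmorph_sum; apply: eq_bigr => j _; rewrite rmorphXn /= mevalXU.
Qed.

Lemma meval_powsum_part (C : comNzRingType) n la (v : 'I_n -> C) :
  (powsum_part C n la).@[v] = \prod_(m <- la) \sum_(j < n) v j ^+ m.
Proof.
rewrite /powsum_part rmorph_prod; apply: eq_bigr => m _. exact: meval_powsum.
Qed.

Lemma meval_sym_homog_eq0 (C : fieldType) n k (f : {mpoly C[n]}) (v : 'I_n -> C) :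
  [pchar C] =i pred0 -> f \is symmetric -> f \is k.-homog ->
  (forall la, is_partition k la -> (powsum_part C n la).@[v] = 0) -> f.@[v] = 0.
Proof.
move=> charC0 f_sym f_homog v_la0.
pose s m := \sum_(j < n) v j ^+ m.
have [t [<- /dhomogP t_wgt]] := sym_fundamental_homog f_sym f_homog.
rewrite comp_mpoly_meval mevalE.
apply: (@wspan_eq0 _ s) => [la /v_la0|]; first by rewrite meval_powsum_part.
rewrite big_seq; apply: wspan_sum => m t_m; apply: wspanMl.
rewrite -(t_wgt m t_m); apply: wspan_prod => i _.
rewrite tnth_mktuple mulnC; apply: wspanX.
apply: wspan_newton charC0 (newton_identities_mesym v) _ _.
by rewrite mesym0E meval1.
Qed.

Section PowerSumSymmetric.
Variables (C : nzRingType) (n : nat).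

Lemma msymXU (s : 'S_n) (i : 'I_n) : msym s ('X_i : {mpoly C[n]}) = 'X_(s i).
Proof.
rewrite msymX; congr mpolyX; apply/mnmP => j; rewrite !mnmE.
by congr (nat_of_bool _); apply/eqP/eqP => [->|<-]; rewrite ?permKV ?permK.
Qed.

Lemma powsum_sym m : powsum C n m \is symmetric.
Proof.
apply/issymP => s; rewrite raddf_sum /=.
under eq_bigr => i _ do rewrite rmorphXn /= msymXU.
by rewrite [RHS](reindex_inj (@perm_inj _ s)).
Qed.

Lemma powsum_part_sym la : powsum_part C n la \is symmetric.
Proof. by apply: rpred_prod => m _; apply: powsum_sym. Qed.

Lemma powsum_homog m : powsum C n m \is m.-homog.
Proof.
apply: rpred_sum => i _; rewrite -{2}[m]mul1n.
by apply: dhomogMn; rewrite dhomogX /= mdeg1.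
Qed.

Lemma powsum_part_homog la : powsum_part C n la \is (sumn la).-homog.
Proof.
elim: la => [|m la IHla]; first by rewrite /powsum_part big_nil dhomog1.
by rewrite /powsum_part big_cons; apply: dhomogM => //; apply: powsum_homog.
Qed.

End PowerSumSymmetric.

Lemma unity_roots_enum (F : decFieldType) d :
  (0 < d)%N -> exists rs : seq F, forall z, z ^+ d = 1 -> z \in rs.
Proof.
move=> d_gt0.
have [rs [q [def_p q_nroot]]] := dec_factor_theorem ('X^d - 1 : {poly F}).
have q_neq0 : q != 0.
  apply: contra_eq_neq def_p => ->; rewrite mul0r.
  by rewrite -size_poly_eq0 size_XnsubC.
exists rs => z zd1; have : root ('X^d - 1) z by rewrite /root !hornerE zd1 subrr.
by rewrite def_p rootM root_prod_XsubC (negPf (q_nroot q_neq0 z)).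
Qed.

Lemma unity_points_enum (F : decFieldType) n d : (0 < d)%N ->
  exists (T : finType) (pt : T -> 'I_n -> F),
    forall z, (forall i, z i ^+ d = 1) -> exists k, z =1 pt k.
Proof.
move=> d_gt0; have [rs rs_d] := unity_roots_enum F d_gt0.
exists {ffun 'I_n -> 'I_(size rs)}.
exists (fun (k : {ffun 'I_n -> 'I_(size rs)}) i => nth 0 rs (k i)) => z zd1.
have z_rs i : (index (z i) rs < size rs)%N by rewrite index_mem rs_d.
by exists [ffun i => Ordinal (z_rs i)] => i; rewrite ffunE nth_index ?rs_d.
Qed.

(* The coefficients are [c i = t ^+ enum_rank i] for a [t] avoiding the roots of
   the finitely many nonzero polynomials [\sum_i u i x * 'X^(enum_rank i)]. *)
Lemma exists_lincomb_neq0 (F : closedFieldType) (I X : finType) (P : X -> Prop)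
    (u : I -> X -> F) :
  (forall x, P x -> exists i, u i x != 0) ->
  exists c : I -> F, forall x, P x -> \sum_i c i * u i x != 0.
Proof.
move=> u_nz; pose p x : {poly F} := \sum_i (u i x)%:P * 'X^(enum_rank i).
have p_neq0 x : P x -> p x != 0.
  case/u_nz => i; apply: contra_neq.
  move/(congr1 (fun q : {poly F} => q`_(enum_rank i))).
  rewrite coef0 coef_sum (bigD1 i) //= coefCM coefXn eqxx mulr1 big1 ?addr0 //.
  move=> j /negPf ji; rewrite coefCM coefXn (inj_eq val_inj).
  by rewrite (inj_eq enum_rank_inj) eq_sym ji mulr0.
have /closed_nonrootP [t] : \prod_(x | p x != 0) p x != 0.
  by rewrite prodf_seq_neq0; apply/allP => x _; apply/implyP.
rewrite /root horner_prod prodf_seq_neq0 => /allP p_t.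
exists (fun i => t ^+ enum_rank i) => x Px.
have /implyP := p_t x (mem_index_enum x); move/(_ (p_neq0 x Px)).
rewrite horner_sum; congr (_ != 0); apply: eq_bigr => i _.
by rewrite hornerCM hornerXn mulrC.
Qed.

Lemma exists_sym_homog_nonvanishing (C : closedFieldType) n d k :
  (0 < d)%N -> (0 < k)%N ->
  (forall z, in_Vd d z ->
     exists2 la, is_partition k la & (powsum_part C n la).@[z] != 0) ->
  exists f : {mpoly C[n]},
    [/\ f \is symmetric, f \is k.-homog & forall z, in_Vd d z -> f.@[z] != 0].
Proof.
move=> d_gt0 k_gt0 z_la; have [T [pt pt_all]] := unity_points_enum C n d_gt0.
have /fin_all_exists2 [lam lam_part lam_nz] : forall x, exists2 la,
    is_partition k la & in_Vd d (pt x) -> (powsum_part C n la).@[pt x] != 0.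
  move=> x; case: (classic (in_Vd d (pt x))) => [/z_la [la la_k la_nz] | nVx].
    by exists la.
  exists [:: k]; last by move/nVx.
  by rewrite /is_partition /= addn0 eqxx !andbT.
have [c c_nz] := @exists_lincomb_neq0 C T T (fun x => in_Vd d (pt x))
  (fun y x => (powsum_part C n (lam y)).@[pt x])
  (fun x Vx => ex_intro _ x (lam_nz x Vx)).
exists (\sum_y c y *: powsum_part C n (lam y)); split.
- by apply/rpred_sum => y _; apply/rpredZ/powsum_part_sym.
- apply/rpred_sum => y _; apply: rpredZ.
  by case/and3P: (lam_part y) => _ _ /eqP <-; apply: powsum_part_homog.
move=> z [zd1 zn1]; have [x z_x] := pt_all z zd1.
have Vx : in_Vd d (pt x) by split=> i; rewrite -z_x; [apply: zd1 | apply: zn1].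
rewrite (meval_eq _ z_x) rmorph_sum /=.
by under eq_bigr do rewrite mevalZ; apply: c_nz.
Qed.

Theorem lemma3p4 (R : realType) (n d a : nat) :
  (0 < n)%N -> (0 < d)%N -> (0 < a)%N ->
  (bad R n d a <->
   exists Q : 'I_n -> R[i],
     in_Vd d Q /\
     forall la : seq nat, is_partition a la -> (powsum_part R[i] n la).@[Q] = 0).
Proof.
move=> _ d_gt0 a_gt0.
split=> [bad_nda | [Q [VQ Q_la0]] [f [f_sym f_homog f_nz]]].
- apply: NNPP => noQ; apply/bad_nda/exists_sym_homog_nonvanishing => // z Vz.
  apply: NNPP => z_la; apply: noQ; exists z; split=> // la la_part.
  by apply/eqP/negPn/negP => Pz; apply: z_la; exists la.
- have := f_nz Q VQ.
  by rewrite (meval_sym_homog_eq0 (pchar_num _) f_sym f_homog Q_la0) eqxx.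
Qed.
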